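(* (a) If $V_T(\cdot)$ is continuous on $Y$ for every natural number $T$, then $\limsup_{T\to\infty}V_T(y_0)\le k^*(y_0)$ for all $y_0\in Y$. (b) If $h_\alpha(\cdot)$ is continuous on $Y$ for every $\alpha\in(0,1)$, then $\limsup_{\alpha\uparrow1}h_\alpha(y_0)\le k^*(y_0)$ for all $y_0\in Y$.
   Context: Let $Y\subset\mathbb{R}^m$ be nonempty compact, $U_0$ a compact metric space, $U(\cdot):Y\rightsquigarrow U_0$ upper semicontinuous and compact-valued, and $f:\mathbb{R}^m\times U_0\to\mathbb{R}^m$, $k:\mathbb{R}^m\times U_0\to\mathbb{R}$ continuous. Put $A(y):=\{u\in U(y): f(y,u)\in Y\}$ and $G:=\{(y,u):y\in Y,\ u\in A(y)\}$. Standing assumption: $A(y)\ne\emptyset$ for all $y\in Y$. For $y_0\in Y$, an admissible process on $\{0,\dots,T-1\}$ (respectively on $\{0,1,\dots\}$) is a pair $(y(t),u(t))$ with $y(0)=y_0$, $u(t)\in A(y(t))$ and $y(t+1)=f(y(t),u(t))$. The controls of such processes form $\mathcal U_T(y_0)$ (respectively $\mathcal U(y_0)$). Value functions: $$V_T(y_0):=\frac1T\min_{u\in\mathcal U_T(y_0)}\sum_{t=0}^{T-1}k(y(t),u(t)),\qquad h_\alpha(y_0):=(1-\alpha)\min_{u\in\mathcal U(y_0)}\sum_{t=0}^{\infty}\alpha^tk(y(t),u(t)).$$ LP value: - $\mathcal P(G)$ denotes the Borel probability measures on $G$ and $\mathcal M_+(G)$ the finite nonnegative Borel measures on $G$. -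 $W:=\{\gamma\in\mathcal P(G):\int_G(\varphi(f(y,u))-\varphi(y))\,d\gamma=0\ \forall\varphi\in C(Y)\}$. - $k^*(y_0)$ is the infimum of $\int_Gk(y,u)\,\gamma(dy,du)$ over pairs $(\gamma,\xi)\in\mathcal P(G)\times\mathcal M_+(G)$ with $\gamma\in W$ and $\int_G(\varphi(y_0)-\varphi(y))\,\gamma(dy,du)+\int_G(\varphi(f(y,u))-\varphi(y))\,\xi(dy,du)=0$ for all $\varphi\in C(Y)$. *)

From HB Require Import structures.
From mathcomp Require Import all_boot all_order all_algebra.
From mathcomp Require Import all_classical all_reals all_analysis.
Set Implicit Arguments. Unset Strict Implicit. Unset Printing Implicit Defensive.
Import Order.TTheory GRing.Theory Num.Theory.
Import numFieldNormedType.Exports.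
Local Open Scope classical_set_scope.
Local Open Scope ring_scope.

Definition traj (R : realType) (m : nat) (U0 : Type)
  (f : 'rV[R]_m * U0 -> 'rV[R]_m) (y0 : 'rV[R]_m) (u : nat -> U0) : nat -> 'rV[R]_m :=
  fix go n := match n with 0%N => y0 | n'.+1 => f (go n', u n') end.

Definition Aset (R : realType) (m : nat) (U0 : Type) (Y : set 'rV[R]_m)
  (U : 'rV[R]_m -> set U0) (f : 'rV[R]_m * U0 -> 'rV[R]_m) (y : 'rV[R]_m) : set U0 :=
  [set u | U y u /\ Y (f (y, u))].

Definition Gset (R : realType) (m : nat) (U0 : Type) (Y : set 'rV[R]_m)
  (U : 'rV[R]_m -> set U0) (f : 'rV[R]_m * U0 -> 'rV[R]_m) : set ('rV[R]_m * U0) :=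
  [set z | Y z.1 /\ Aset Y U f z.1 z.2].

(* controls of admissible processes on {0,...,T-1} (only u(0..T-1) matter) *)
Definition admissibleT (R : realType) (m : nat) (U0 : Type) (Y : set 'rV[R]_m)
  (U : 'rV[R]_m -> set U0) (f : 'rV[R]_m * U0 -> 'rV[R]_m) (T : nat)
  (y0 : 'rV[R]_m) : set (nat -> U0) :=
  [set u | forall t, (t < T)%N -> Aset Y U f (traj f y0 u t) (u t)].

Definition admissible (R : realType) (m : nat) (U0 : Type) (Y : set 'rV[R]_m)
  (U : 'rV[R]_m -> set U0) (f : 'rV[R]_m * U0 -> 'rV[R]_m)
  (y0 : 'rV[R]_m) : set (nat -> U0) :=
  [set u | forall t, Aset Y U f (traj f y0 u t) (u t)].

Definition VT (R : realType) (m : nat) (U0 : Type) (Y : set 'rV[R]_m)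
  (U : 'rV[R]_m -> set U0) (f : 'rV[R]_m * U0 -> 'rV[R]_m)
  (k : 'rV[R]_m * U0 -> R) (T : nat) (y0 : 'rV[R]_m) : R :=
  inf [set (T%:R)^-1 * \sum_(0 <= t < T) k (traj f y0 u t, u t)
      | u in admissibleT Y U f T y0].

Definition halpha (R : realType) (m : nat) (U0 : Type) (Y : set 'rV[R]_m)
  (U : 'rV[R]_m -> set U0) (f : 'rV[R]_m * U0 -> 'rV[R]_m)
  (k : 'rV[R]_m * U0 -> R) (alpha : R) (y0 : 'rV[R]_m) : R :=
  (1 - alpha) * inf [set limn (fun n => \sum_(0 <= t < n) alpha ^+ t * k (traj f y0 u t, u t))
      | u in admissible Y U f y0].

Definition borelRU (R : realType) (m : nat) (U0 : pseudoPMetricType R) :=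
  g_sigma_algebraType (@open ('rV[R]_m * U0)%type).

(* LP value k*(y0): infimum of int_G k dgamma over pairs (gamma, xi) with
   gamma a Borel probability measure on G, xi a finite nonnegative Borel
   measure on G (both realised as measures on R^m x U0 concentrated on G),
   gamma in W, and the second linear constraint, for all phi in C(Y). *)
Definition kstar (R : realType) (m : nat) (U0 : pseudoPMetricType R)
  (Y : set 'rV[R]_m) (U : 'rV[R]_m -> set U0) (f : 'rV[R]_m * U0 -> 'rV[R]_m)
  (k : 'rV[R]_m * U0 -> R) (y0 : 'rV[R]_m) : \bar R :=
  let G : set (@borelRU R m U0) := Gset Y U f in
  ereal_inf [set x | exists (gamma : probability (@borelRU R m U0) R)
                            (xi : {finite_measure set (@borelRU R m U0) -> \bar R}),
     [/\ gamma (~` G) = 0%E, xi (~` G) = 0%E,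
         (forall phi : 'rV[R]_m -> R, {within Y, continuous phi} ->
            (\int[gamma]_(z in G) (phi (f z) - phi z.1)%:E = 0)%E),
         (forall phi : 'rV[R]_m -> R, {within Y, continuous phi} ->
            (\int[gamma]_(z in G) (phi y0 - phi z.1)%:E
             + \int[xi]_(z in G) (phi (f z) - phi z.1)%:E = 0)%E)
       & x = (\int[gamma]_(z in G) (k z)%:E)%E]].

(* A feasible pair (gamma, xi) of the linear program says two things about any
   phi in C(Y): the first constraint makes gamma invariant, int phi o f dgamma =
   int phi dgamma, and the second rewrites phi(y0) - int phi dgamma as
   - int (phi o f - phi) dxi, which is at most D xi(G) as soon as
   phi(y) - phi(f(y,u)) <= D on G.
   Continuity of V_T allows testing the constraints with T V_T, the optimal
   T-step cost. Integrating the dynamic programming inequality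
   T V_T(y) <= k(y,u) + (T-1) V_(T-1)(f(y,u)) against the invariant gamma gives
   int V_T dgamma <= int k dgamma by induction, while one step of the dynamics
   changes T V_T by at most 2 max|k|; hence V_T(y0) <= int k dgamma
   + 2 max|k| xi(G) / T. Likewise h_a(y) <= (1-a) k(y,u) + a h_a(f(y,u)) yields
   h_a(y0) <= int k dgamma + 2 (1-a) max|k| xi(G). Let T -> oo, resp. a -> 1-,
   and take the infimum over feasible pairs. *)

From HB Require Import structures.
From mathcomp Require Import all_boot all_order all_algebra.
From mathcomp Require Import all_classical all_reals all_analysis.
From mathcomp Require Import lra.
Set Implicit Arguments.
Unset Strict Implicit.
Unset Printing Implicit Defensive.
Import Order.TTheory GRing.Theory Num.Theory.
Import numFieldNormedType.Exports.
Local Open Scope classical_set_scope.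
Local Open Scope ring_scope.

Section real_facts.
Variable R : realType.

Lemma inf_scale (c : R) (E : set R) : 0 <= c ->
  inf [set c * x | x in E] = c * inf E.
Proof.
rewrite le_eqVlt => /predU1P[<-|c0].
  have [->|/set0P[x Ex]] := eqVneq E set0; first by rewrite image_set0 inf0 mul0r.
  rewrite mul0r (_ : [set _ | x in E] = [set 0]) ?inf1 //.
  apply/seteqP; split => [_ [y _ <-]|_ ->]; first by rewrite mul0r.
  by exists x; rewrite ?mul0r.
have [[E0 [b Eb]]|noinf] := pselect (has_inf E); last first.
  rewrite [inf E]inf_out // mulr0 inf_out // => -[[_ [x Ex _]] [b cEb]]; apply: noinf.
  split; first by exists x.
  by exists (b / c) => y Ey; rewrite ler_pdivrMr // mulrC cEb //; exists y.
have cE0 : [set c * x | x in E] !=set0 by case: E0 => x Ex; exists (c * x), x.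
apply/le_anti/andP; split.
  have cElb : lbound [set c * x | x in E] (c * b).
    by move=> _ [x Ex <-]; rewrite ler_pM2l // Eb.
  rewrite -ler_pdivrMl //; apply: lb_le_inf => // x Ex.
  by rewrite ler_pdivrMl //; apply: ge_inf; [exists (c * b) | exists x].
apply: lb_le_inf => // _ [x Ex <-]; rewrite ler_pM2l //.
by apply: ge_inf => //; exists b.
Qed.

Lemma limf_esup_le_add_cvg0 (T : choiceType) (X : filteredType T)
    (F : set_system X) {FF : Filter F} (u g : X -> R) (c : R) :
  (\forall x \near F, u x <= c + g x) -> g @ F --> 0 ->
  (limf_esup (EFin \o u) F <= c%:E)%E.
Proof.
move=> ucg g0; apply/lee_addgt0Pr => e e0.
apply: (@le_trans _ _ (ereal_sup ((EFin \o u) @` [set x | u x <= c + e]))).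
  apply: ereal_inf_lbound; exists [set x | u x <= c + e] => //.
  near=> x => /=.
  have uxg : u x <= c + g x by near: x.
  have gxe : g x < e by near: x; exact: cvgr_lt g0 _ e0.
  by rewrite (le_trans uxg) // lerD2l ltW.
by apply: ge_ereal_sup => _ [x /= ule <-]; rewrite lee_fin.
Unshelve. all: by end_near. Qed.

Lemma is_cvg_normed_series_geometric_bound (u : R ^nat) (a z : R) :
  `|z| < 1 -> (forall n, `|u n| <= a * z ^+ n) -> cvgn [normed series u].
Proof.
move=> z1 uaz; apply: (series_le_cvg _ _ uaz) => [n|n|]; first exact: normr_ge0.
  exact: le_trans (normr_ge0 _) (uaz n).
exact: is_cvg_geometric_series.
Qed.

Lemma norm_lim_series_geometric_bound (u : R ^nat) (a z : R) : `|z| < 1 ->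
  (forall n, `|u n| <= a * z ^+ n) -> `|limn (series u)| <= a / (1 - z).
Proof.
move=> z1 uaz; have ucvg := is_cvg_normed_series_geometric_bound z1 uaz.
apply: le_trans (lim_series_norm ucvg) _.
rewrite -(cvg_lim _ (@cvg_geometric_series _ a z z1)) //.
exact: lim_series_le ucvg (is_cvg_geometric_series z1) uaz.
Qed.

Lemma compact_continuous_bounded (T : topologicalType) (S : set T) (phi : T -> R) :
  compact S -> {within S, continuous phi} -> exists M, forall x, S x -> `|phi x| <= M.
Proof.
move=> Sc phic; have /compact_bounded[B [_ phiB]] := continuous_compact phic Sc.
by exists (B + 1) => x Sx; apply: (phiB (B + 1)); [rewrite ltrDl | exists x].
Qed.

End real_facts.

Section integrable_EFin.
Context {d} {T : measurableType d} {R : realType} {mu : {measure set T -> \bar R}}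
  {D : set T}.
Hypothesis mD : measurable D.

Lemma integrable_EFinZl (r : R) (h : T -> R) : mu.-integrable D (EFin \o h) ->
  mu.-integrable D (EFin \o (fun x => r * h x)).
Proof. by move=> hi; apply: eq_integrable (integrableZl mD r hi). Qed.

Lemma integrable_EFinD (h1 h2 : T -> R) : mu.-integrable D (EFin \o h1) ->
  mu.-integrable D (EFin \o h2) -> mu.-integrable D (EFin \o (fun x => h1 x + h2 x)).
Proof. by move=> h1i h2i; apply: eq_integrable (integrableD mD h1i h2i). Qed.

Lemma integrable_EFinB (h1 h2 : T -> R) : mu.-integrable D (EFin \o h1) ->
  mu.-integrable D (EFin \o h2) -> mu.-integrable D (EFin \o (fun x => h1 x - h2 x)).
Proof. by move=> h1i h2i; apply: eq_integrable (integrableB mD h1i h2i). Qed.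

End integrable_EFin.

Lemma continuous_within_comp (X W V : topologicalType) (A : set X) (B : set W)
    (p : X -> W) (phi : W -> V) :
  continuous p -> (forall x, A x -> B (p x)) -> {within B, continuous phi} ->
  {within A, continuous (phi \o p)}.
Proof.
move=> pc pAB /continuousP phic; apply/continuousP => O oO.
have /open_subspaceP [V' oV' V'E] := phic O oO.
apply/open_subspaceP; exists (p @^-1` V'); first exact: (continuousP _).1 pc _ oV'.
apply/seteqP; split => x [xV Ax]; split => //.
- have : (V' `&` B) (p x) by split => //; exact: pAB.
  by rewrite V'E => -[].
- have : (phi @^-1` O `&` B) (p x) by split => //; exact: pAB.
  by rewrite -V'E => -[].
Qed.

Section usc_graph.
Variables (X Z : topologicalType) (Y : set X) (U : X -> set Z).
Hypotheses (Y_closed : closed Y) (Z_hausdorff : hausdorff_space Z)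
  (Z_compact : compact [set: Z])
  (U_usc : forall y, Y y -> forall O : set Z, open O -> U y `<=` O ->
     \forall y' \near y, Y y' -> U y' `<=` O)
  (U_closed : forall y, Y y -> closed (U y)).

Lemma closed_graph : closed [set z : X * Z | Y z.1 /\ U z.1 z.2].
Proof.
rewrite -openC openE => -[y u] /= notG.
have [Yy|notYy] := pselect (Y y); last first.
  exists (~` Y, setT) => /=.
    split; last exact: filterT.
    by apply: open_nbhs_nbhs; split => //; exact: closed_openC.
  by move=> [a b] /= [notYa _] [].
(* Compact Hausdorff spaces are regular: [u] has a neighbourhood [C] whose
   closure misses [U y], and so does [U y'] for [y'] near [y]. *)
have notUyu : ~ U y u by move=> Uyu; apply: notG.
have [|C Cu closCU] :=
  compact_regular Z_hausdorff Z_compact (filterT : nbhs u setT) (t := ~` U y).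
  by apply: open_nbhs_nbhs; split => //; exact/closed_openC/U_closed.
have Uclos : U y `<=` ~` closure C by move=> v Uyv /closCU.
have near_y := U_usc Yy (closed_openC (@closed_closure _ C)) Uclos.
exists ([set y' | Y y' -> U y' `<=` ~` closure C], C) => //=.
by move=> [a b] [/= aC Cb] [Ya Uab]; apply: (aC Ya b Uab); apply: subset_closure.
Qed.

End usc_graph.

Section optimal_control.
Variables (R : realType) (m : nat) (U0 : Type) (Y : set 'rV[R]_m)
  (U : 'rV[R]_m -> set U0) (f : 'rV[R]_m * U0 -> 'rV[R]_m)
  (k : 'rV[R]_m * U0 -> R) (M : R).
Hypothesis normk_le : forall z, Y z.1 -> `|k z| <= M.
Hypothesis A_neq0 : forall y, Y y -> Aset Y U f y !=set0.

Definition ucons (a : U0) (v : nat -> U0) : nat -> U0 :=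
  fun n => if n is n'.+1 then v n' else a.

Lemma traj_ucons y a v n : traj f y (ucons a v) n.+1 = traj f (f (y, a)) v n.
Proof. by elim: n => [//|n IH] /=; rewrite -IH. Qed.

Lemma admissibleT_ucons T y a v : Aset Y U f y a ->
  admissibleT Y U f T (f (y, a)) v -> admissibleT Y U f T.+1 y (ucons a v).
Proof. by move=> ya hv [|t] tT //; rewrite traj_ucons; apply: hv. Qed.

Lemma admissible_ucons y a v : Aset Y U f y a ->
  admissible Y U f (f (y, a)) v -> admissible Y U f y (ucons a v).
Proof. by move=> ya hv [|t] //; rewrite traj_ucons. Qed.

Lemma admissibleTS T y v :
  admissibleT Y U f T.+1 y v -> admissibleT Y U f T y v.
Proof. by move=> hv t tT; apply/hv/ltnW. Qed.

Lemma admissible_admissibleT T y v :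
  admissible Y U f y v -> admissibleT Y U f T y v.
Proof. by move=> hv t _; apply: hv. Qed.

Lemma traj_in_Y T y v : Y y -> admissibleT Y U f T y v ->
  forall t, (t <= T)%N -> Y (traj f y v t).
Proof. by move=> Yy hv; elim=> [//|t IH] tT; have [] := hv t tT. Qed.

Lemma admissible_traj_in_Y y v t : Y y -> admissible Y U f y v ->
  Y (traj f y v t).
Proof.
by move=> Yy hv; exact: (traj_in_Y Yy (admissible_admissibleT hv) (leqnn t)).
Qed.

Lemma admissible_exists y : Y y -> exists v, admissible Y U f y v.
Proof.
move=> Yy.
have gex z : exists a, Y z -> Aset Y U f z a.
  have [Yz|nYz] := pselect (Y z); first by have [a za] := A_neq0 Yz; exists a.
  by have [a _] := A_neq0 Yy; exists a => /nYz.
have [g gA] := choice gex.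
pose s := fix s n := if n is n'.+1 then f (s n', g (s n')) else y.
have Ys n : Y (s n) by elim: n => [//|n IH] /=; have [] := gA _ IH.
have traj_s n : traj f y (g \o s) n = s n by elim: n => [//|n /= ->].
by exists (g \o s) => t; rewrite traj_s; apply: gA.
Qed.

Lemma k_ge z : Y z.1 -> - M <= k z.
Proof. by move/normk_le; rewrite ler_norml => /andP[]. Qed.

Lemma k_le z : Y z.1 -> k z <= M.
Proof. by move/normk_le; rewrite ler_norml => /andP[]. Qed.

Definition cost y v T := \sum_(0 <= t < T) k (traj f y v t, v t).

(* [min_cost T] is [T * VT T] (lemma [min_costE]); the dynamic programming
   inequalities are free of the factor [1/T] when stated for it. *)
Definition min_cost T y := inf [set cost y v T | v in admissibleT Y U f T y].

Lemma cost_ucons y a v T :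
  cost y (ucons a v) T.+1 = k (y, a) + cost (f (y, a)) v T.
Proof.
rewrite /cost big_nat_recl //; congr (_ + _).
by apply: eq_bigr => t _; rewrite traj_ucons.
Qed.

Lemma costS y v T : cost y v T.+1 = cost y v T + k (traj f y v T, v T).
Proof. by rewrite /cost big_nat_recr. Qed.

Lemma cost_ge T y v : Y y -> admissibleT Y U f T y v -> - (T%:R * M) <= cost y v T.
Proof.
move=> Yy hv.
have -> : T%:R * M = \sum_(0 <= t < T) M by rewrite sumr_const_nat subn0 mulr_natl.
rewrite -sumrN.
apply: ler_sum_nat => t /andP[_ tT]; apply: k_ge.
exact: (traj_in_Y Yy hv (ltnW tT)).
Qed.

Lemma min_cost_le T y v : Y y -> admissibleT Y U f T y v ->
  min_cost T y <= cost y v T.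
Proof.
move=> Yy hv; apply: ge_inf; last by exists v.
by exists (- (T%:R * M)) => _ [w hw <-]; apply: cost_ge.
Qed.

Lemma min_cost_ge T y x : Y y ->
  (forall v, admissibleT Y U f T y v -> x <= cost y v T) -> x <= min_cost T y.
Proof.
move=> Yy xle; apply: lb_le_inf => [|_ [v hv <-]]; last exact: xle.
have [v /admissible_admissibleT hv] := admissible_exists Yy.
by exists (cost y v T), v.
Qed.

Lemma min_cost0 y : min_cost 0 y = 0.
Proof.
rewrite /min_cost; have [->|/set0P[v hv]] := eqVneq (admissibleT Y U f 0 y) set0.
  by rewrite image_set0 inf0.
rewrite (_ : [set cost y w 0 | w in _] = [set 0]) ?inf1 //.
apply/seteqP; split => [_ [w _ <-]|_ ->]; last exists v => //.
  by rewrite /cost /= big_geq.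
by rewrite /cost big_geq.
Qed.

(* Also for [T = 0], because [0^-1 = 0]. *)
Lemma VTE T y : VT Y U f k T y = T%:R^-1 * min_cost T y.
Proof. by rewrite -inf_scale ?invr_ge0 // /VT /min_cost -image_comp. Qed.

Lemma min_costE T y : min_cost T y = T%:R * VT Y U f k T y.
Proof.
case: T => [|T]; first by rewrite min_cost0 mul0r.
by rewrite VTE mulrA divff ?mul1r ?pnatr_eq0.
Qed.

Lemma min_cost_dp T y a : Y y -> Aset Y U f y a ->
  min_cost T.+1 y <= k (y, a) + min_cost T (f (y, a)).
Proof.
move=> Yy ya; rewrite addrC -lerBlDr; apply: (min_cost_ge ya.2) => v hv.
rewrite lerBlDr addrC -cost_ucons.
exact/min_cost_le/admissibleT_ucons.
Qed.

Lemma min_cost_le_succ T y : Y y -> min_cost T y <= min_cost T.+1 y + M.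
Proof.
move=> Yy; rewrite -lerBlDr; apply: (min_cost_ge Yy) => v hv.
rewrite lerBlDr (le_trans (min_cost_le Yy (admissibleTS hv))) // costS -addrA lerDl.
by rewrite -lerBlDr sub0r; apply: k_ge; exact: (traj_in_Y Yy hv (leqnSn T)).
Qed.

Lemma min_cost_drop T y a : Y y -> Aset Y U f y a ->
  min_cost T y - min_cost T (f (y, a)) <= M + M.
Proof.
move=> Yy ya; have M0 : 0 <= M := le_trans (normr_ge0 _) (@normk_le (y, a) Yy).
case: T => [|T]; first by rewrite !min_cost0 subrr addr_ge0.
have := min_cost_dp T Yy ya; have := min_cost_le_succ T ya.2.
have := @k_le (y, a) Yy; lra.
Qed.

Section discounted.
Variable alpha : R.
Hypotheses (alpha_gt0 : 0 < alpha) (alpha_lt1 : alpha < 1).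

Let disc_term y v t := alpha ^+ t * k (traj f y v t, v t).

Definition disc_cost y v := limn (series (disc_term y v)).

Lemma disc_term_le y v t : Y y -> admissible Y U f y v ->
  `|disc_term y v t| <= M * alpha ^+ t.
Proof.
move=> Yy hv; rewrite normrM normrX ger0_norm ?(ltW alpha_gt0) // mulrC.
rewrite ler_wpM2r ?exprn_ge0 ?(ltW alpha_gt0) //.
exact/normk_le/admissible_traj_in_Y.
Qed.

Let alpha_norm_lt1 : `|alpha| < 1.
Proof. by rewrite ger0_norm // ltW. Qed.

Let subr1_gt0 : 0 < 1 - alpha.
Proof. by rewrite subr_gt0. Qed.

Lemma disc_cost_ge y v : Y y -> admissible Y U f y v ->
  - (M / (1 - alpha)) <= disc_cost y v.
Proof.
move=> Yy hv; suff : `|disc_cost y v| <= M / (1 - alpha).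
  by rewrite ler_norml => /andP[].
by apply: norm_lim_series_geometric_bound => // t; apply: disc_term_le.
Qed.

Lemma disc_cost_ucons y a v : Aset Y U f y a ->
  admissible Y U f (f (y, a)) v ->
  disc_cost y (ucons a v) = k (y, a) + alpha * disc_cost (f (y, a)) v.
Proof.
move=> ya hv; apply: cvg_lim => //; rewrite -cvg_shiftS /=.
have -> : (fun n => series (disc_term y (ucons a v)) n.+1) =
    (fun n => k (y, a) + alpha * series (disc_term (f (y, a)) v) n).
  apply/funext => n; rewrite /series /= big_nat_recl // /disc_term expr0 mul1r.
  congr (_ + _); rewrite mulr_sumr; apply: eq_bigr => t _.
  by rewrite traj_ucons exprS mulrA.
apply: cvgD; first exact: cvg_cst.
apply: cvgMl_tmp; apply: normed_cvg.
apply: is_cvg_normed_series_geometric_bound alpha_norm_lt1 _ => t.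
exact: disc_term_le ya.2 hv.
Qed.

Definition min_disc_cost y := inf [set disc_cost y v | v in admissible Y U f y].

Lemma halphaE y : halpha Y U f k alpha y = (1 - alpha) * min_disc_cost y.
Proof. by []. Qed.

Lemma min_disc_cost_le y v : Y y -> admissible Y U f y v ->
  min_disc_cost y <= disc_cost y v.
Proof.
move=> Yy hv; apply: ge_inf; last by exists v.
by exists (- (M / (1 - alpha))) => _ [w hw <-]; apply: disc_cost_ge.
Qed.

Lemma min_disc_cost_ge y x : Y y ->
  (forall v, admissible Y U f y v -> x <= disc_cost y v) -> x <= min_disc_cost y.
Proof.
move=> Yy xle; apply: lb_le_inf => [|_ [v hv <-]]; last exact: xle.
by have [v hv] := admissible_exists Yy; exists (disc_cost y v), v.
Qed.

Lemma min_disc_cost_dp y a : Y y -> Aset Y U f y a ->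
  min_disc_cost y <= k (y, a) + alpha * min_disc_cost (f (y, a)).
Proof.
move=> Yy ya; rewrite -lerBlDl -ler_pdivrMl //; apply: (min_disc_cost_ge ya.2) => v hv.
rewrite ler_pdivrMl // lerBlDl -disc_cost_ucons //.
exact/min_disc_cost_le/admissible_ucons.
Qed.

Lemma halpha_ge y : Y y -> - M <= halpha Y U f k alpha y.
Proof.
move=> Yy; rewrite halphaE -ler_pdivrMl // mulrN mulrC.
by apply: (min_disc_cost_ge Yy) => v hv; exact: disc_cost_ge.
Qed.

Lemma halpha_dp y a : Y y -> Aset Y U f y a ->
  halpha Y U f k alpha y <=
  (1 - alpha) * k (y, a) + alpha * halpha Y U f k alpha (f (y, a)).
Proof.
move=> Yy ya; rewrite !halphaE mulrCA -mulrDr ler_pM2l //.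
exact: min_disc_cost_dp.
Qed.

Lemma halpha_drop y a : Y y -> Aset Y U f y a ->
  halpha Y U f k alpha y - halpha Y U f k alpha (f (y, a)) <= (1 - alpha) * (M + M).
Proof.
move=> Yy ya; have := halpha_dp Yy ya; have := halpha_ge ya.2.
have := @k_le (y, a) Yy; have := subr1_gt0; nra.
Qed.

End discounted.

End optimal_control.

Section lp_constraints.
Variables (R : realType) (m : nat) (U0 : pseudoPMetricType R) (Y : set 'rV[R]_m)
  (U : 'rV[R]_m -> set U0) (f : 'rV[R]_m * U0 -> 'rV[R]_m).
Hypotheses (Y_compact : compact Y) (U0_hausdorff : hausdorff_space U0)
  (U0_compact : compact [set: U0])
  (U_usc : forall y, Y y -> forall O : set U0, open O -> U y `<=` O ->
     \forall y' \near y, Y y' -> U y' `<=` O)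
  (U_compact : forall y, Y y -> compact (U y))
  (f_cont : continuous f).

Local Notation Z := (@borelRU R m U0).
Let G : set Z := Gset Y U f.

Let Y_closed : closed Y.
Proof. exact: compact_closed (@norm_hausdorff _ _) Y_compact. Qed.

Lemma Gset_closed : closed (Gset Y U f).
Proof.
rewrite (_ : Gset Y U f = [set z | Y z.1 /\ U z.1 z.2] `&` f @^-1` Y).
  apply: closedI; last exact: preimage_closed.
  apply: closed_graph => // y Yy; exact: compact_closed U0_hausdorff (U_compact Yy).
by apply/seteqP; split => -[y u] /= [] => [Yy [Uyu Yf] | [Yy Uyu] Yf].
Qed.

Lemma Gset_compact : compact (Gset Y U f).
Proof.
apply: (subclosed_compact Gset_closed (compact_setX Y_compact U0_compact)).
by move=> z [Yz _].
Qed.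

Lemma measurable_open (A : set Z) : open A -> measurable A.
Proof. exact: sub_sigma_algebra. Qed.

Lemma measurable_Gset : measurable G.
Proof.
rewrite -[G]setCK; apply: measurableC; apply: measurable_open.
exact: closed_openC Gset_closed.
Qed.

Lemma measurable_fun_Gset (g : Z -> R) : {within G, continuous g} -> measurable_fun G g.
Proof.
move=> gc; apply: (measurability _ (measurable_realfun.RGenOpens.measurableE R)).
move=> _ [_ [a [b ->] <-]].
have oab : open (`]a, b[%classic : set R) by exact: interval_open.
have /open_subspaceP [V oV VE] := (continuousP _).1 gc _ oab.
rewrite setIC -VE; apply: measurableI; first exact: measurable_open.
exact: measurable_Gset.
Qed.

Lemma integrable_Gset (mu : {finite_measure set Z -> \bar R}) (g : Z -> R) :
  {within G, continuous g} -> mu.-integrable G (EFin \o g).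
Proof.
move=> gc; apply: measurable_bounded_integrable.
- exact: measurable_Gset.
- by rewrite ltey_eq fin_num_measure //; exact: measurable_Gset.
- exact: measurable_fun_Gset.
have [B gB] := compact_continuous_bounded Gset_compact gc.
exists B; split; first exact: num_real.
by move=> x Bx z Gz; apply: le_trans (gB z Gz) (ltW Bx).
Qed.

Lemma integrable_continuous (mu : {finite_measure set Z -> \bar R}) (g : Z -> R) :
  continuous g -> mu.-integrable G (EFin \o g).
Proof. by move=> gc; apply/integrable_Gset/continuous_subspaceT. Qed.

Lemma integrable_comp_fst (mu : {finite_measure set Z -> \bar R})
    (phi : 'rV[R]_m -> R) :
  {within Y, continuous phi} -> mu.-integrable G (EFin \o (fun z => phi z.1)).
Proof.
move=> phic; apply: integrable_Gset; apply: (continuous_within_comp _ _ phic).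
  by move=> z; exact: cvg_fst.
by move=> z [].
Qed.

Lemma integrable_comp_f (mu : {finite_measure set Z -> \bar R}) (phi : 'rV[R]_m -> R) :
  {within Y, continuous phi} -> mu.-integrable G (EFin \o (fun z => phi (f z))).
Proof.
move=> phic; apply: integrable_Gset; apply: (continuous_within_comp _ _ phic) => //.
by move=> [y u] [_ []].
Qed.

Lemma EFin_Rintegral (mu : {measure set Z -> \bar R}) (g : Z -> R) :
  mu.-integrable G (EFin \o g) ->
  (\int[mu]_(z in G) g z)%:E = (\int[mu]_(z in G) (g z)%:E)%E.
Proof. by move=> gi; rewrite fineK // (integrable_fin_num measurable_Gset gi). Qed.

Definition lp_feasible (gamma : probability Z R) (xi : {finite_measure set Z -> \bar R})
    (y0 : 'rV[R]_m) :=
  [/\ gamma (~` G) = 0%E, xi (~` G) = 0%E,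
      forall phi, {within Y, continuous phi} ->
        (\int[gamma]_(z in G) (phi (f z) - phi z.1)%:E = 0)%E &
      forall phi, {within Y, continuous phi} ->
        (\int[gamma]_(z in G) (phi y0 - phi z.1)%:E
         + \int[xi]_(z in G) (phi (f z) - phi z.1)%:E = 0)%E].

Variables (k : 'rV[R]_m * U0 -> R) (M : R).
Hypotheses (k_cont : continuous k) (normk_le : forall z, Y z.1 -> `|k z| <= M)
  (A_neq0 : forall y, Y y -> Aset Y U f y !=set0).

Lemma le_kstar y0 (x : \bar R) :
  (forall gamma xi, lp_feasible gamma xi y0 ->
     (x <= (\int[gamma]_(z in G) k z)%:E)%E) ->
  (x <= kstar Y U f k y0)%E.
Proof.
move=> x_le; apply: le_ereal_inf_tmp => _ [gamma [xi [gammaGc xiGc stat init ->]]].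
rewrite -EFin_Rintegral; last exact: integrable_continuous.
exact: (x_le gamma xi (And4 gammaGc xiGc stat init)).
Qed.

Section feasible_pair.
Variables (gamma : probability Z R) (xi : {finite_measure set Z -> \bar R})
  (y0 : 'rV[R]_m).
Hypothesis feasible : lp_feasible gamma xi y0.

Let gamma_Gc : gamma (~` G) = 0%E.
Proof. by case: feasible. Qed.

Let stationary phi : {within Y, continuous phi} ->
  (\int[gamma]_(z in G) (phi (f z) - phi z.1)%:E = 0)%E.
Proof. by case: feasible => _ _ + _; apply. Qed.

Let init_flow phi : {within Y, continuous phi} ->
  (\int[gamma]_(z in G) (phi y0 - phi z.1)%:E
   + \int[xi]_(z in G) (phi (f z) - phi z.1)%:E = 0)%E.
Proof. by case: feasible => _ _ _; apply. Qed.

Lemma gamma_G : gamma G = 1%E.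
Proof.
have := probability_setC gamma measurable_Gset; rewrite gamma_Gc.
rewrite -(fineK (fin_num_measure gamma G measurable_Gset)); move: (fine _) => r.
by rewrite -EFinB => /eqP; rewrite eqe eq_sym subr_eq0 => /eqP <-.
Qed.

Lemma Rintegral_stationary (phi : 'rV[R]_m -> R) : {within Y, continuous phi} ->
  \int[gamma]_(z in G) phi (f z) = \int[gamma]_(z in G) phi z.1.
Proof.
move=> phic; apply/eqP; rewrite -subr_eq0 -RintegralB //.
- by rewrite /Rintegral stationary.
- exact: measurable_Gset.
- exact: integrable_comp_f.
- exact: integrable_comp_fst.
Qed.

Lemma Rintegral_dp_le (g : Z -> R) (phi psi : 'rV[R]_m -> R) (a b : R) :
  continuous g -> {within Y, continuous phi} -> {within Y, continuous psi} ->
  (forall z, G z -> phi z.1 <= a * g z + b * psi (f z)) ->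
  \int[gamma]_(z in G) phi z.1 <=
  a * \int[gamma]_(z in G) g z + b * \int[gamma]_(z in G) psi z.1.
Proof.
move=> gc phic psic dp.
have mG := measurable_Gset.
have agi := integrable_EFinZl mG a (integrable_continuous gamma gc).
have bpsifi := integrable_EFinZl mG b (integrable_comp_f gamma psic).
rewrite -(Rintegral_stationary psic) -!RintegralZl //; last 2 first.
- exact: integrable_comp_f.
- exact: integrable_continuous.
rewrite -RintegralD //; apply: le_Rintegral dp => //; first exact: integrable_comp_fst.
exact: (integrable_EFinD mG agi bpsifi).
Qed.

Lemma init_value_le (phi : 'rV[R]_m -> R) (D : R) : {within Y, continuous phi} ->
  (forall z, G z -> phi z.1 - phi (f z) <= D) ->
  phi y0 <= \int[gamma]_(z in G) phi z.1 + D * fine (xi G).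
Proof.
move=> phic drop; have mG := measurable_Gset.
have cst_i (mu : {finite_measure set Z -> \bar R}) r :
    mu.-integrable G (EFin \o (fun=> r)) :=
  integrable_continuous mu (@cst_continuous _ _ r).
have init_i :=
  integrable_EFinB mG (cst_i gamma (phi y0)) (integrable_comp_fst gamma phic).
have flow_i :=
  integrable_EFinB mG (integrable_comp_f xi phic) (integrable_comp_fst xi phic).
have := init_flow phic; rewrite -(EFin_Rintegral init_i) -(EFin_Rintegral flow_i).
rewrite -EFinD => /eqP; rewrite eqe => /eqP.
rewrite RintegralB //; [|exact: cst_i|exact: integrable_comp_fst].
rewrite Rintegral_cst // [X in _ * X](_ : _ = 1) ?mulr1 => [flow|]; last first.
  exact: (congr1 fine gamma_G).
have : \int[xi]_(z in G) (- D) <= \int[xi]_(z in G) (phi (f z) - phi z.1).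
  apply: le_Rintegral flow_i _ => // [|z Gz]; first exact: cst_i.
  by rewrite lerNl opprB drop.
rewrite Rintegral_cst // mulNr; lra.
Qed.

Local Notation avg_k := (\int[gamma]_(z in G) k z).

Section finite_horizon.
Hypothesis VT_cont : forall T, (0 < T)%N -> {within Y, continuous (VT Y U f k T)}.

Let min_cost_cont T : {within Y, continuous (min_cost Y U f k T)}.
Proof.
case: T => [|T].
  rewrite (_ : min_cost _ _ _ _ 0 = cst 0); first exact: cst_continuous.
  by apply/funext => y; exact: min_cost0.
rewrite (_ : min_cost _ _ _ _ _ = fun y => T.+1%:R * VT Y U f k T.+1 y).
  move=> y; apply: (@continuousM R (subspace Y) (cst T.+1%:R) (VT Y U f k T.+1));
    [exact: cst_continuous | exact: VT_cont].
by apply/funext => y; exact: min_costE.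
Qed.

Lemma Rintegral_min_cost_le T :
  \int[gamma]_(z in G) min_cost Y U f k T z.1 <= T%:R * avg_k.
Proof.
elim: T => [|T IH].
  rewrite mul0r (@eq_Rintegral _ _ _ _ _ (cst 0)) => [|z _]; last exact: min_cost0.
  by rewrite Rintegral_cst ?mul0r //; exact: measurable_Gset.
apply: le_trans (_ : avg_k + T%:R * avg_k <= _); last by rewrite -nat1r mulrDl mul1r.
apply: le_trans (_ : 1 * avg_k + 1 * \int[gamma]_(z in G) min_cost Y U f k T z.1 <= _).
  apply: Rintegral_dp_le => // -[y u] [Yy yu]; rewrite !mul1r.
  exact: (min_cost_dp normk_le A_neq0 T Yy yu).
by rewrite !mul1r lerD2l.
Qed.

Lemma VT_le T : VT Y U f k T.+1 y0 <= avg_k + (M + M) * fine (xi G) / T.+1%:R.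
Proof.
rewrite VTE ler_pdivrMl ?ltr0Sn // mulrDr mulrCA mulfV ?pnatr_eq0 // mulr1.
have drop z : G z -> min_cost Y U f k T.+1 z.1 - min_cost Y U f k T.+1 (f z) <= M + M.
  by case: z => y u [Yy yu]; exact: (min_cost_drop normk_le A_neq0 T.+1 Yy yu).
apply: le_trans (init_value_le (@min_cost_cont T.+1) drop) _.
by rewrite lerD2r; exact: Rintegral_min_cost_le.
Qed.

Lemma limn_esup_VT_le : (limn_esup (fun T => (VT Y U f k T y0)%:E) <= avg_k%:E)%E.
Proof.
apply: (limf_esup_le_add_cvg0 (g := fun T => (M + M) * fine (xi G) / T%:R)).
  near=> T; have /prednK <- : (0 < T)%N by near: T; exists 1%N.
  exact: VT_le.
rewrite -cvg_shiftS.
have := cvgMl_tmp (FF := eventually_filter) (a := (M + M) * fine (xi G))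
  (@cvg_harmonic R).
by rewrite mulr0.
Unshelve. all: by end_near. Qed.

End finite_horizon.

Section discounted.
Variable alpha : R.
Hypotheses (alpha_gt0 : 0 < alpha) (alpha_lt1 : alpha < 1)
  (halpha_cont : {within Y, continuous (halpha Y U f k alpha)}).

Lemma Rintegral_halpha_le : \int[gamma]_(z in G) halpha Y U f k alpha z.1 <= avg_k.
Proof.
have : \int[gamma]_(z in G) halpha Y U f k alpha z.1 <=
    (1 - alpha) * avg_k + alpha * \int[gamma]_(z in G) halpha Y U f k alpha z.1.
  apply: Rintegral_dp_le => // -[y u] [Yy yu].
  exact: (halpha_dp normk_le A_neq0 alpha_gt0 alpha_lt1 Yy yu).
have : 0 < 1 - alpha by rewrite subr_gt0.
nra.
Qed.

Lemma halpha_le :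
  halpha Y U f k alpha y0 <= avg_k + (1 - alpha) * ((M + M) * fine (xi G)).
Proof.
have drop z : G z -> halpha Y U f k alpha z.1 - halpha Y U f k alpha (f z) <=
    (1 - alpha) * (M + M).
  case: z => y u [Yy yu].
  exact: (halpha_drop normk_le A_neq0 alpha_gt0 alpha_lt1 Yy yu).
apply: le_trans (init_value_le halpha_cont drop) _.
by rewrite mulrA lerD2r; exact: Rintegral_halpha_le.
Qed.

End discounted.

Lemma limf_esup_halpha_le :
  (forall alpha, 0 < alpha < 1 -> {within Y, continuous (halpha Y U f k alpha)}) ->
  (limf_esup (fun alpha => (halpha Y U f k alpha y0)%:E) (at_left 1) <= avg_k%:E)%E.
Proof.
move=> halpha_cont.
apply: (limf_esup_le_add_cvg0 (FF := at_left_proper_filter 1)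
  (g := fun a => (1 - a) * ((M + M) * fine (xi G)))).
  near=> a; have a0 : 0 < a by near: a; exact: nbhs_left_gt.
  have a1 : a < 1 by near: a; exact: nbhs_left_lt.
  by apply: halpha_le => //; apply: halpha_cont; rewrite a0 a1.
apply: cvg_at_left_filter.
have : (1 - a) * ((M + M) * fine (xi G)) @[a --> (1 : R)] -->
    (1 - 1) * ((M + M) * fine (xi G)).
  by apply: cvgMr_tmp; apply: cvgB; [exact: cvg_cst | exact: cvg_id].
by rewrite subrr mul0r.
Unshelve. all: by end_near. Qed.

End feasible_pair.

End lp_constraints.

Theorem theorem3p1 (R : realType) (m : nat) (U0 : pseudoPMetricType R)
  (Y : set 'rV[R]_m) (U : 'rV[R]_m -> set U0)
  (f : 'rV[R]_m * U0 -> 'rV[R]_m) (k : 'rV[R]_m * U0 -> R)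
  (hY : compact Y) (hY0 : Y !=set0)
  (hU0T2 : hausdorff_space U0) (hU0 : compact [set: U0])
  (hUusc : forall y, Y y -> forall O : set U0, open O -> U y `<=` O ->
             \forall y' \near y, Y y' -> U y' `<=` O)
  (hUcpt : forall y, Y y -> compact (U y))
  (hf : continuous f) (hk : continuous k)
  (hA : forall y, Y y -> Aset Y U f y !=set0) :
  ((forall T : nat, (0 < T)%N -> {within Y, continuous (VT Y U f k T)}) ->
     forall y0, Y y0 ->
       (limn_esup (fun T : nat => (VT Y U f k T y0)%:E) <= kstar Y U f k y0)%E)
  /\
  ((forall alpha : R, 0 < alpha < 1 -> {within Y, continuous (halpha Y U f k alpha)}) ->
     forall y0, Y y0 ->
       (limf_esup (fun alpha : R => (halpha Y U f k alpha y0)%:E) (at_left 1)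
          <= kstar Y U f k y0)%E).
Proof.
have [M normk_le] : exists M, forall z, Y z.1 -> `|k z| <= M.
  have [M kM] :=
    compact_continuous_bounded (compact_setX hY hU0) (continuous_subspaceT hk).
  by exists M => z Yz; apply: kM.
(* The bounds hold for every initial state [y0], in [Y] or not. *)
split=> [VT_cont | halpha_cont] y0 _;
  apply: (le_kstar hY hU0T2 hU0 hUusc hUcpt hf hk) => gamma xi feasible.
- exact: (limn_esup_VT_le hY hU0T2 hU0 hUusc hUcpt hf hk normk_le hA feasible VT_cont).
- exact: (limf_esup_halpha_le hY hU0T2 hU0 hUusc hUcpt hf hk normk_le hA feasible
    halpha_cont).
Qed.
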